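(* Let $P$ be a $3$-dimensional subspace of $\mathbb{R}^7$. Then the $3$-dimensional subspaces $\Lambda^2(P)$ and $\Psi(P)$ of $\Lambda^2(\mathbb{R}^7)$ are orthogonal to each other.
   Context: Equip $\mathbb{R}^7$ with its standard inner product, orientation and basis $e_1,\dots,e_7$. Let $\varphi = e_{123} - e_{167} - e_{527} - e_{563} - e_{415} - e_{426} - e_{437}$ ($e_{ijk} = e_i\wedge e_j\wedge e_k$) and $\psi = \star\varphi = e_{4567} - e_{4523} - e_{4163} - e_{4127} - e_{2637} - e_{1537} - e_{1526}$. For $u,v$: $u\wedge v$ is the 2-form $(a,b)\mapsto \langle u,a\rangle\langle v,b\rangle - \langle u,b\rangle\langle v,a\rangle$ and $\Psi_{uv}$ is the 2-form $(a,b)\mapsto\psi(u,v,a,b)$. $\Lambda^2(P) = \mathrm{Span}\{u\wedge v: u,v\in P\}$, $\Psi(P) = \mathrm{Span}\{\Psi_{uv} : u,v\in P\}$. The inner product on $\Lambda^2$ is $\langle X,Y\rangle = \sum_{i,j} X(e_i,e_j)Y(e_i,e_j)$. *)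

(* R^7 is modelled as row vectors 'rV[R]_7 over R : realType,
   2-forms on R^7 as 7x7 matrices X with X i j = X(e_i, e_j). *)
From HB Require Import structures.
From mathcomp Require Import all_boot all_order all_algebra.
From mathcomp Require Import reals.
Set Implicit Arguments. Unset Strict Implicit. Unset Printing Implicit Defensive.
Import Order.TTheory GRing.Theory Num.Theory.
Local Open Scope ring_scope.

Section G2.
Variable R : realType.

(* standard basis vector e_i, with 1-based index i in 1..7 *)
Definition e (i : nat) : 'rV[R]_7 := delta_mx 0 (inord i.-1).

Definition coord7 (u : 'rV[R]_7) (i : nat) : R := u 0 (inord i.-1).

Definition e4 (i j k l : nat) (a b c d : 'rV[R]_7) : R :=
  \det (\matrix_(r < 4, s < 4)
          coord7 (nth a [:: a; b; c; d] r) (nth i [:: i; j; k; l] s)).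

Definition psi (a b c d : 'rV[R]_7) : R :=
  e4 4 5 6 7 a b c d - e4 4 5 2 3 a b c d - e4 4 1 6 3 a b c d
  - e4 4 1 2 7 a b c d - e4 2 6 3 7 a b c d - e4 1 5 3 7 a b c d
  - e4 1 5 2 6 a b c d.

Definition wedge2 (u v : 'rV[R]_7) : 'M[R]_7 :=
  \matrix_(i, j) (u 0 i * v 0 j - u 0 j * v 0 i).

Definition Psi2 (u v : 'rV[R]_7) : 'M[R]_7 :=
  \matrix_(i, j) psi u v (delta_mx 0 i) (delta_mx 0 j).

Definition ip2 (X Y : 'M[R]_7) : R := \sum_(i < 7) \sum_(j < 7) X i j * Y i j.

Definition in_Lambda2 (m : nat) (P : 'M[R]_(m, 7)) (X : 'M[R]_7) : Prop :=
  exists (n : nat) (a : 'I_n -> R) (us vs : 'I_n -> 'rV[R]_7),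
    (forall k, (us k <= P)%MS) /\ (forall k, (vs k <= P)%MS) /\
    X = \sum_(k < n) a k *: wedge2 (us k) (vs k).

Definition in_PsiP (m : nat) (P : 'M[R]_(m, 7)) (Y : 'M[R]_7) : Prop :=
  exists (n : nat) (a : 'I_n -> R) (us vs : 'I_n -> 'rV[R]_7),
    (forall k, (us k <= P)%MS) /\ (forall k, (vs k <= P)%MS) /\
    Y = \sum_(k < n) a k *: Psi2 (us k) (vs k).

End G2.

(* Pairing u /\ v with Psi_{wz} gives psi(w,z,u,v) - psi(w,z,v,u), by bilinearity
   of psi in its last two arguments.  When u, v, w, z all lie in P both terms are
   values of an alternating 4-form on four vectors of a space of dimension at most 3,
   hence vanish. *)
From HB Require Import structures.
From mathcomp Require Import all_boot all_order all_algebra.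
From mathcomp Require Import reals.
Set Implicit Arguments. Unset Strict Implicit. Unset Printing Implicit Defensive.
Import Order.TTheory GRing.Theory Num.Theory.
Local Open Scope ring_scope.

Lemma det_row_sum (R : comPzRingType) n (A : 'M[R]_n) k m
    (c : 'I_m -> R) (B : 'I_m -> 'M[R]_n) :
  (forall t r s, r != k -> B t r s = A r s) ->
  (forall s, A k s = \sum_t c t * B t k s) ->
  \det A = \sum_t c t * \det (B t).
Proof.
move=> eqB rowA.
have cofB t j : cofactor (B t) k j = cofactor A k j.
  rewrite /cofactor; congr (_ * \det _).
  by apply/matrixP => r s; rewrite !mxE eqB // eq_sym neq_lift.
under eq_bigr => t _ do rewrite (expand_det_row (B t) k) mulr_sumr.
rewrite (expand_det_row A k) exchange_big; apply: eq_bigr => j _ /=.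
rewrite rowA mulr_suml; apply: eq_bigr => t _.
by rewrite cofB mulrA.
Qed.

Lemma det_mulmx_eq0 (F : fieldType) n m (A : 'M[F]_(n, m)) (B : 'M[F]_(m, n)) :
  (m < n)%N -> \det (A *m B) = 0.
Proof.
move=> ltmn; apply/eqP; apply: contraT => detAB_neq0.
have := mxrankM_maxl A B.
rewrite mxrank_unit ?unitmxE ?unitfE // => le_n_rankA.
by have := leq_trans le_n_rankA (rank_leq_col A); rewrite leqNgt ltmn.
Qed.

Section G2.
Variable R : realType.
Implicit Types (a b c d u v w z : 'rV[R]_7) (X Y : 'M[R]_7).

Lemma coord7_sum m (x : 'I_m -> R) (cs : 'I_m -> 'rV[R]_7) i :
  coord7 (\sum_t x t *: cs t) i = \sum_t x t * coord7 (cs t) i.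
Proof. by rewrite /coord7 summxE; apply: eq_bigr => t _; rewrite mxE. Qed.

Lemma e4_sum3 i j k l a b m (x : 'I_m -> R) (cs : 'I_m -> 'rV[R]_7) d :
  e4 i j k l a b (\sum_t x t *: cs t) d = \sum_t x t * e4 i j k l a b (cs t) d.
Proof.
apply: (@det_row_sum _ 4 _ (inord 2)) => [t r s|s].
  by rewrite !mxE; case: r => [[|[|[|[|]]]]] //= ?; rewrite /eq_op /= inordK.
by rewrite !mxE inordK //= coord7_sum; apply: eq_bigr => t _; rewrite mxE inordK.
Qed.

Lemma e4_sum4 i j k l a b c m (x : 'I_m -> R) (cs : 'I_m -> 'rV[R]_7) :
  e4 i j k l a b c (\sum_t x t *: cs t) = \sum_t x t * e4 i j k l a b c (cs t).
Proof.
apply: (@det_row_sum _ 4 _ (inord 3)) => [t r s|s].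
  by rewrite !mxE; case: r => [[|[|[|[|]]]]] //= ?; rewrite /eq_op /= inordK.
by rewrite !mxE inordK //= coord7_sum; apply: eq_bigr => t _; rewrite mxE inordK.
Qed.

Lemma psi_sum3 a b m (x : 'I_m -> R) (cs : 'I_m -> 'rV[R]_7) d :
  psi a b (\sum_t x t *: cs t) d = \sum_t x t * psi a b (cs t) d.
Proof. by rewrite /psi !e4_sum3 -!sumrB; apply: eq_bigr => t _; rewrite !mulrBr. Qed.

Lemma psi_sum4 a b c m (x : 'I_m -> R) (cs : 'I_m -> 'rV[R]_7) :
  psi a b c (\sum_t x t *: cs t) = \sum_t x t * psi a b c (cs t).
Proof. by rewrite /psi !e4_sum4 -!sumrB; apply: eq_bigr => t _; rewrite !mulrBr. Qed.

Lemma psi_expand u v a b :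
  psi u v a b =
  \sum_(i < 7) \sum_(j < 7) a 0 i * b 0 j * psi u v (delta_mx 0 i) (delta_mx 0 j).
Proof.
rewrite {1}(row_sum_delta a) psi_sum3; apply: eq_bigr => i _.
rewrite {1}(row_sum_delta b) psi_sum4 mulr_sumr; apply: eq_bigr => j _.
by rewrite mulrA.
Qed.

Lemma ip2C X Y : ip2 X Y = ip2 Y X.
Proof. by rewrite /ip2; apply: eq_bigr => i _; apply: eq_bigr => j _; rewrite mulrC. Qed.

Lemma ip2_suml n (x : 'I_n -> R) (W : 'I_n -> 'M[R]_7) Y :
  ip2 (\sum_k x k *: W k) Y = \sum_k x k * ip2 (W k) Y.
Proof.
rewrite /ip2; under eq_bigr => i _.
  under eq_bigr => j _ do rewrite summxE mulr_suml.
  rewrite exchange_big; over.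
rewrite exchange_big; apply: eq_bigr => k _ /=.
rewrite mulr_sumr; apply: eq_bigr => i _; rewrite mulr_sumr.
by apply: eq_bigr => j _; rewrite mxE mulrA.
Qed.

Lemma ip2_wedge2_Psi2 w z u v :
  ip2 (wedge2 w z) (Psi2 u v) = psi u v w z - psi u v z w.
Proof.
rewrite !psi_expand /ip2 -sumrB; apply: eq_bigr => i _.
rewrite -sumrB; apply: eq_bigr => j _.
by rewrite !mxE mulrBl [w 0 j * _]mulrC.
Qed.

Lemma e4_eq0_submx m (P : 'M[R]_(m, 7)) i j k l a b c d :
  (m < 4)%N -> (a <= P)%MS -> (b <= P)%MS -> (c <= P)%MS -> (d <= P)%MS ->
  e4 i j k l a b c d = 0.
Proof.
move=> ltm4 /submxP[xa ->] /submxP[xb ->] /submxP[xc ->] /submxP[xd ->].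
rewrite /e4 (_ : \matrix_(r, s) _ =
  (\matrix_(r < 4, t < m) nth xa [:: xa; xb; xc; xd] r 0 t) *m
  (\matrix_(t < m, s < 4) P t (inord (nth i [:: i; j; k; l] s).-1))); last first.
  apply/matrixP => r s; rewrite /coord7 !mxE.
  by case: r => [[|[|[|[|//]]]]] ? /=; rewrite !mxE; apply: eq_bigr => t _; rewrite !mxE.
exact: det_mulmx_eq0.
Qed.

Lemma psi_eq0_submx m (P : 'M[R]_(m, 7)) a b c d :
  (m < 4)%N -> (a <= P)%MS -> (b <= P)%MS -> (c <= P)%MS -> (d <= P)%MS ->
  psi a b c d = 0.
Proof.
move=> ltm4 aP bP cP dP.
by rewrite /psi !(e4_eq0_submx _ _ _ _ ltm4 aP bP cP dP) !subr0.
Qed.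

Lemma ip2_wedge2_Psi2_eq0 m (P : 'M[R]_(m, 7)) u v w z :
  (m < 4)%N -> (u <= P)%MS -> (v <= P)%MS -> (w <= P)%MS -> (z <= P)%MS ->
  ip2 (wedge2 u v) (Psi2 w z) = 0.
Proof.
move=> ltm4 uP vP wP zP.
rewrite ip2_wedge2_Psi2 (psi_eq0_submx ltm4 wP zP uP vP).
by rewrite (psi_eq0_submx ltm4 wP zP vP uP) subrr.
Qed.

End G2.
Unset Implicit Arguments. Set Strict Implicit.

Theorem lemma4p4 (R : realType) (P : 'M[R]_(3, 7)) :
  \rank P = 3%N ->
  forall X Y : 'M[R]_7,
    in_Lambda2 P X -> in_PsiP P Y -> ip2 X Y = 0.
Proof.
move=> _ X Y [n [a [us [vs [usP [vsP ->]]]]]] [m [b [ws [zs [wsP [zsP ->]]]]]].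
rewrite ip2_suml big1 // => k _.
rewrite ip2C ip2_suml big1 ?mulr0 // => l _.
by rewrite ip2C (ip2_wedge2_Psi2_eq0 _ (usP k) (vsP k) (wsP l) (zsP l)) ?mulr0.
Qed.
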